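(* For every finite graph $G$ and every integer $i\geq1$, $$\mathrm{lw}_i(G)=\min_{(P^1,\mathcal{Z}^1),\ldots,(P^i,\mathcal{Z}^i)}\ \max\Big\{\Big|\bigcap_{j=1}^i Z^j_{u_j}\Big| : u_j\in V(P^j)\text{ for } j=1,\ldots,i\Big\},$$ where the minimum ranges over all $i$-tuples of path decompositions $(P^j,\mathcal{Z}^j)$, $\mathcal{Z}^j=(Z^j_u)_{u\in V(P^j)}$, of $G$.
   Context: All graphs are finite, simple and undirected. A path decomposition of $G$ is a pair $(P,\mathcal{Z})$ with $P$ a path and $\mathcal{Z}=(Z_u)_{u\in V(P)}$ subsets of $V(G)$ such that every edge of $G$ lies in some $Z_u$ and for every $v\in V(G)$ the set $\{u: v\in Z_u\}$ is non-empty and induces a connected subpath of $P$. For vertices $u,v$ of a connected graph, the interval $I(u,v)$ is the set of vertices lying on some shortest $(u,v)$-path. A set $S$ of vertices is (geodesically) convex if $I(u,v)\subseteq S$ for all $u,v\in S$. A graph $M$ is median if it is connected and for any three vertices $u,v,w$ we have $|I(u,v)\cap I(v,w)\cap I(w,u)|=1$. A median decomposition of a graph $G$ is a pair $(M,\mathcal{X})$ where $M$ is a median graph and $\mathcal{X}=(X_a)_{a\in V(M)}$ is a family of subsets of $V(G)$ (bags) such that (M1) for every edge $uv\in E(G)$ there is $a\in V(M)$ with $u,v\in X_a$, and (M2) for every $v\in V(G)$ the set $\{a\in V(M): v\in X_a\}$ is non-empty and convex in $M$. Its width is $\max_{a\in V(M)}|X_a|$. A $k$-lattice is a Cartesian product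 of $k$ (finite) paths. The lattice dimension of a graph $M$ is the least $k$ such that $M$ admits an isometric (distance-preserving) embedding into a $k$-lattice. For $i\geq1$, an $i$-lattice decomposition of $G$ is a median decomposition $(M,\mathcal{X})$ of $G$ with $M$ of lattice dimension at most $i$, and the $i$-latticewidth $\mathrm{lw}_i(G)$ is the minimum width of an $i$-lattice decomposition of $G$. *)

From HB Require Import structures.
From mathcomp Require Import all_boot.
Set Implicit Arguments. Unset Strict Implicit. Unset Printing Implicit Defensive.

Definition simple_graph (T : finType) (e : rel T) : Prop :=
  symmetric e /\ irreflexive e.

Fixpoint walkb (T : finType) (e : rel T) (k : nat) (u v : T) : bool :=
  match k with
  | 0 => u == v
  | k'.+1 => [exists w, e u w && walkb e k' w v]
  end.

(* graph distance (least length of a walk); equals #|T| if v is unreachable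
   (irrelevant here: only used on connected graphs). *)
Definition gdist (T : finType) (e : rel T) (u v : T) : nat :=
  find (fun k => walkb e k u v) (iota 0 #|T|).

Definition interval (T : finType) (e : rel T) (u v : T) : {set T} :=
  [set w | gdist e u w + gdist e w v == gdist e u v].

Definition connected_graph (T : finType) (e : rel T) : Prop :=
  (exists a : T, True) /\ (forall a b : T, connect e a b).

Definition median_graph (T : finType) (e : rel T) : Prop :=
  connected_graph e /\
  forall u v w : T, #|interval e u v :&: interval e v w :&: interval e w u| = 1.

Definition gconvex (T : finType) (e : rel T) (S : {set T}) : Prop :=
  forall u v, u \in S -> v \in S -> interval e u v \subset S.

Definition absdiff (m n : nat) : nat := (m - n) + (n - m).

(* isometric embedding into a k-lattice P_{n_0} x ... x P_{n_{k-1}}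
   (path P_n has vertices 0..n-1; product distance is the l1 distance) *)
Definition lattice_embeds (T : finType) (e : rel T) (k : nat) : Prop :=
  exists (n : 'I_k -> nat) (phi : T -> 'I_k -> nat),
    (forall a j, phi a j < n j) /\
    (forall a b, gdist e a b = \sum_(j < k) absdiff (phi a j) (phi b j)).

Definition lattice_dim_le (T : finType) (e : rel T) (i : nat) : Prop :=
  exists2 k, k <= i & lattice_embeds e k.

Definition median_decomposition (T : finType) (e : rel T)
    (M : finType) (eM : rel M) (X : M -> {set T}) : Prop :=
  simple_graph eM /\ median_graph eM /\
  (forall u v, e u v -> exists a, (u \in X a) && (v \in X a)) /\
  (forall v, (exists a, v \in X a) /\ gconvex eM [set a | v \in X a]).

Definition md_width (T M : finType) (X : M -> {set T}) : nat :=
  \max_(a : M) #|X a|.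

Definition lattice_dec_width (T : finType) (e : rel T) (i w : nat) : Prop :=
  exists (M : finType) (eM : rel M) (X : M -> {set T}),
    median_decomposition e eM X /\ lattice_dim_le eM i /\ md_width X = w.

(* path decomposition: the path P has vertices 0..size Z - 1 (size Z >= 1),
   bag of vertex k is nth set0 Z k *)
Definition path_decomposition (T : finType) (e : rel T) (Z : seq {set T}) : Prop :=
  0 < size Z /\
  (forall u v, e u v ->
     exists2 k, k < size Z & (u \in nth set0 Z k) && (v \in nth set0 Z k)) /\
  (forall v, (exists2 k, k < size Z & v \in nth set0 Z k) /\
     (forall a b c, a <= b -> b <= c -> c < size Z ->
        v \in nth set0 Z a -> v \in nth set0 Z c -> v \in nth set0 Z b)).

Definition bag_inter (T : finType) (i : nat) (Zs : 'I_i -> seq {set T})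
    (u : 'I_i -> nat) : {set T} :=
  \bigcap_(j < i) nth set0 (Zs j) (u j).

Definition tuple_value (T : finType) (i : nat) (Zs : 'I_i -> seq {set T}) (w : nat) : Prop :=
  (exists u : 'I_i -> nat, (forall j, u j < size (Zs j)) /\ #|bag_inter Zs u| = w) /\
  (forall u : 'I_i -> nat, (forall j, u j < size (Zs j)) -> #|bag_inter Zs u| <= w).

Definition path_tuple_width (T : finType) (e : rel T) (i w : nat) : Prop :=
  exists Zs : 'I_i -> seq {set T},
    (forall j, path_decomposition e (Zs j)) /\ tuple_value Zs w.

Definition is_min (P : nat -> Prop) (w : nat) : Prop :=
  P w /\ forall w', P w' -> w <= w'.

Definition latticewidth_is (T : finType) (e : rel T) (i w : nat) : Prop :=
  is_min (lattice_dec_width e i) w.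

From mathcomp Require Import all_boot zify.
From Stdlib Require Import Classical.
Set Implicit Arguments. Unset Strict Implicit. Unset Printing Implicit Defensive.

(* Given i path decompositions, the grid P^1 x ... x P^i is a median graph that
   embeds isometrically in an i-lattice; giving the node (u_1, ..., u_i) the bag
   Z^1_{u_1} cap ... cap Z^i_{u_i} yields a median decomposition of the same width,
   since the nodes whose bag contains a fixed vertex form a box, which is convex.
   Conversely, project a median decomposition over M, isometrically embedded in
   an i-lattice, onto each coordinate j: the t-th bag of the j-th path
   decomposition holds the vertices v whose shadow (the set of nodes whose bag
   contains v) projects onto an interval through t.  For vertices in a common
   intersection of such bags, the shadows are convex and their projections overlap
   in every coordinate; gates in median graphs then force them to meet pairwise,
   and the Helly property of convex sets in median graphs yields a node whose bag
   contains the whole intersection. *)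

Lemma ex_minP (P : nat -> Prop) : (exists n, P n) -> exists m, is_min P m.
Proof.
case=> n; elim/ltn_ind: n => n IH Pn.
have [[m lt_mn Pm] | no_less] := classic (exists2 m, m < n & P m); first exact: IH Pm.
exists n; split=> // m Pm; rewrite leqNgt; apply/negP => lt_mn.
by apply: no_less; exists m.
Qed.

Lemma ex_maxP (P : nat -> Prop) b : (exists n, P n) -> (forall n, P n -> n <= b) ->
  exists m, P m /\ forall n, P n -> n <= m.
Proof.
move=> [n Pn] le_b.
have [|d [[Pd le_db] min_d]] := @ex_minP (fun d => P (b - d) /\ d <= b).
  by exists (b - n); rewrite subKn ?leq_subr ?le_b.
exists (b - d); split=> // m Pm.
have le_mb := le_b m Pm.
have := min_d (b - m); rewrite subKn // leq_subr => /(_ (conj Pm isT)); lia.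
Qed.

Lemma absdiffC m n : absdiff m n = absdiff n m.
Proof. by rewrite /absdiff addnC. Qed.

Lemma absdiffnn n : absdiff n n = 0.
Proof. by rewrite /absdiff subnn. Qed.

Definition between (a b c : nat) : Prop := absdiff a b + absdiff b c = absdiff a c.

Lemma betweenE a m b : between a m b <-> minn a b <= m <= maxn a b.
Proof.
rewrite /between /absdiff; split=> [btw | /andP[? ?]]; last by lia.
by apply/andP; split; lia.
Qed.

Lemma between_left_le a m b : between a m b -> m < b -> a <= m.
Proof. by move=> /betweenE; lia. Qed.

Lemma between_left_ge a m b : between a m b -> b < m -> m <= a.
Proof. by move=> /betweenE; lia. Qed.

Definition ord_convex (P : pred nat) : Prop :=
  forall a b c, a <= b <= c -> P a -> P c -> P b.

Lemma ord_convex_between (P : pred nat) a b c :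
  ord_convex P -> between a b c -> P a -> P c -> P b.
Proof.
rewrite /between /absdiff => convP btw Pa Pc.
case: (leqP a c) => le_ac; [apply: (convP a _ c) | apply: (convP c _ a)] => //;
  apply/andP; split; lia.
Qed.

Definition l1dist k (x y : 'I_k -> nat) : nat := \sum_j absdiff (x j) (y j).

Lemma l1distC k (x y : 'I_k -> nat) : l1dist x y = l1dist y x.
Proof. by apply: eq_bigr => j _; rewrite absdiffC. Qed.

Lemma l1dist_triangle k (x y z : 'I_k -> nat) : l1dist x y <= l1dist x z + l1dist z y.
Proof. by rewrite -big_split; apply: leq_sum => j _ /=; rewrite /absdiff; lia. Qed.

Lemma l1dist_betweenP k (x y z : 'I_k -> nat) :
  l1dist x z + l1dist z y = l1dist x y <-> forall j, between (x j) (z j) (y j).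
Proof.
rewrite /l1dist -big_split /=; split=> [|btw]; last by apply: eq_bigr => j _; apply: btw.
have /leqif_sum le_sums : forall j, true ->
    absdiff (x j) (y j) <= absdiff (x j) (z j) + absdiff (z j) (y j)
    ?= iff (absdiff (x j) (y j) == absdiff (x j) (z j) + absdiff (z j) (y j)).
  by move=> j _; split; [rewrite /absdiff; lia | ].
move=> /esym/eqP; rewrite le_sums.2 => /forallP all_eq j.
exact/esym/eqP/all_eq.
Qed.

Lemma find_iota_first (p : pred nat) N d :
  d < N -> p d -> (forall m, m < d -> ~~ p m) -> find p (iota 0 N) = d.
Proof.
move=> lt_dN pd before_d.
have has_p : has p (iota 0 N) by apply/hasP; exists d => //; rewrite mem_iota.
have := has_p; rewrite has_find size_iota => lt_find.
apply/eqP; rewrite eqn_leq; apply/andP; split; rewrite leqNgt.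
  by apply/negP => /(before_find 0); rewrite nth_iota // add0n pd.
apply/negP => /before_d; have := nth_find 0 has_p.
by rewrite nth_iota // add0n => ->.
Qed.

Section GraphDistance.
Variables (M : finType) (eM : rel M).

Lemma walkbS k u v : walkb eM k.+1 u v = [exists w, eM u w && walkb eM k w v].
Proof. by []. Qed.

Lemma walkbSr k u v : walkb eM k.+1 u v = [exists w, walkb eM k u w && eM w v].
Proof.
elim: k u => [|k IH] u; rewrite walkbS; apply/existsP/existsP.
- by case=> w /andP[uw /eqP <-]; exists u; rewrite /= eqxx.
- by case=> w /andP[/eqP <- uv]; exists v; rewrite /= eqxx andbT.
- case=> w /andP[uw]; rewrite IH => /existsP[w' /andP[ww' w'v]].
  by exists w'; rewrite w'v andbT walkbS; apply/existsP; exists w; rewrite uw.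
- case=> w' /andP[]; rewrite walkbS => /existsP[w /andP[uw ww'] w'v].
  by exists w; rewrite uw IH; apply/existsP; exists w'; rewrite ww'.
Qed.

Lemma walkb_sym : symmetric eM -> forall k u v, walkb eM k u v = walkb eM k v u.
Proof.
move=> eM_sym; elim=> [|k IH] u v; first by rewrite /= eq_sym.
by rewrite [RHS]walkbSr; apply: eq_existsb => w; rewrite IH eM_sym andbC.
Qed.

Lemma gdistC : symmetric eM -> forall u v, gdist eM u v = gdist eM v u.
Proof. by move=> eM_sym u v; apply: eq_find => k; apply: walkb_sym. Qed.

Lemma gdist_eq0 u v : gdist eM u v = 0 -> u = v.
Proof.
rewrite /gdist; have : 0 < #|M| by apply/card_gt0P; exists u.
by case: #|M| => // N _ /=; case: eqP.
Qed.

Lemma walkb_connect k u v : walkb eM k u v -> connect eM u v.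
Proof.
elim: k u => [|k IH] u; first by move/eqP ->.
by rewrite walkbS => /existsP[w /andP[uw /IH]]; apply: connect_trans (connect1 uw).
Qed.

Section Potential.
Variable D : M -> M -> nat.
Hypotheses (D_eq0 : forall a b, D a b = 0 -> a = b) (Dnn : forall a, D a a = 0).
Hypothesis D_edge : forall a c b, eM a c -> D a b <= (D c b).+1.
Hypothesis D_descent : forall a b, a != b -> exists2 c, eM a c & D c b < D a b.
Hypothesis D_small : forall a b, D a b < #|M|.

Lemma walkb_potential a b : walkb eM (D a b) a b.
Proof.
move Dab: (D a b) => d; elim: d a Dab => [|d IH] a Dab; first by rewrite /= (D_eq0 Dab).
have [eq_ab|neq_ab] := eqVneq a b; first by rewrite eq_ab Dnn in Dab.
have [c ac lt_c] := D_descent neq_ab; have le_ac := D_edge b ac.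
by rewrite walkbS; apply/existsP; exists c; rewrite ac IH //; lia.
Qed.

Lemma walkb_potential_ge k a b : walkb eM k a b -> D a b <= k.
Proof.
elim: k a => [|k IH] a; first by move/eqP ->; rewrite Dnn.
by rewrite walkbS => /existsP[c /andP[ac /IH]]; have := D_edge b ac; lia.
Qed.

Lemma gdist_potential a b : gdist eM a b = D a b.
Proof.
apply: find_iota_first; [exact: D_small | exact: walkb_potential |].
by move=> m lt_m; apply/negP => /walkb_potential_ge; lia.
Qed.

End Potential.
End GraphDistance.

(** * Convex sets in median graphs *)

Lemma gconvexI (M : finType) (eM : rel M) (A B : {set M}) :
  gconvex eM A -> gconvex eM B -> gconvex eM (A :&: B).
Proof.
move=> convA convB u v; rewrite !inE => /andP[uA uB] /andP[vA vB].
by rewrite subsetI convA ?convB.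
Qed.

Section MedianGraph.
Variables (M : finType) (eM : rel M).
Hypothesis eM_median : median_graph eM.

Lemma median_exists u v w :
  exists m, [/\ m \in interval eM u v, m \in interval eM v w & m \in interval eM w u].
Proof.
have /eqP/cards1P[m med_m] := eM_median.2 u v w.
by exists m; have := set11 m; rewrite -med_m !inE => /andP[/andP[-> ->] ->].
Qed.

Lemma gconvex_meet3 (A B C : {set M}) :
  gconvex eM A -> gconvex eM B -> gconvex eM C ->
  A :&: B != set0 -> B :&: C != set0 -> C :&: A != set0 -> A :&: B :&: C != set0.
Proof.
move=> convA convB convC /set0Pn[x /setIP[xA xB]] /set0Pn[y /setIP[yB yC]].
move=> /set0Pn[z /setIP[zC zA]]; have [m [mxy myz mzx]] := median_exists x y z.
apply/set0Pn; exists m; rewrite !inE (subsetP (convA z x zA xA)) //.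
by rewrite (subsetP (convB x y xB yB)) // (subsetP (convC y z yC zC)).
Qed.

Lemma gconvex_helly_within (A : {set M}) (L : seq {set M}) :
  gconvex eM A -> A != set0 ->
  {in L, forall B, gconvex eM B /\ A :&: B != set0} ->
  {in L &, forall B C, B :&: C != set0} ->
  exists2 x, x \in A & {in L, forall B : {set M}, x \in B}.
Proof.
elim: L A => [|B L IH] A convA A_ne convL meetL.
  by have /set0Pn[x xA] := A_ne; exists x.
have sub_L : {subset L <= B :: L} by move=> C CL; rewrite inE CL orbT.
have [convB meetAB] := convL B (mem_head B L).
have [||||x /setIP[xA xB] xL] := IH (A :&: B).
- exact: gconvexI convA convB.
- exact: meetAB.
- move=> C CL; have [convC meetAC] := convL C (sub_L C CL).
  split=> //; apply: (gconvex_meet3 convA convB convC meetAB); last by rewrite setIC.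
  by apply: meetL; rewrite ?mem_head ?sub_L.
- by move=> C D CL DL; apply: meetL; rewrite ?sub_L.
by exists x => // C; rewrite inE => /predU1P[->|/xL].
Qed.

Lemma gconvex_helly (L : seq {set M}) :
  {in L, forall A, gconvex eM A} -> {in L &, forall A B, A :&: B != set0} ->
  exists x, {in L, forall A : {set M}, x \in A}.
Proof.
move=> convL meetL; have [[a _] _] := eM_median.1.
have [||||x _ xL] := @gconvex_helly_within setT L; last by exists x.
- by move=> u v _ _; apply: subsetT.
- by apply/set0Pn; exists a.
- move=> B BL; rewrite setTI -[B in B != _]setIid.
  by split; [apply: convL | apply: meetL].
- exact: meetL.
Qed.

Hypothesis eM_sym : symmetric eM.

Lemma gate_in_interval (A : {set M}) a b :
  gconvex eM A -> a \in A -> (forall a', a' \in A -> gdist eM a b <= gdist eM a' b) ->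
  forall a', a' \in A -> a \in interval eM a' b.
Proof.
move=> convA aA a_gate a' a'A; have [m [maa' ma'b mba]] := median_exists a a' b.
have le_ab := a_gate m (subsetP (convA a a' aA a'A) m maa').
suff <- : m = a by [].
apply: (@gdist_eq0 _ eM); move: mba; rewrite inE (gdistC eM_sym b m) (gdistC eM_sym b a).
by move/eqP; lia.
Qed.

End MedianGraph.

(** * Grids *)

Lemma ltn_mul_expS k n : k * n < n.+1 ^ k.
Proof. by elim: k => [|k IH]; rewrite ?expn0 // expnS; nia. Qed.

Definition med3 a b c := maxn (minn a b) (minn (maxn a b) c).

Lemma between_med3 a b c :
  [/\ between a (med3 a b c) b, between b (med3 a b c) c & between c (med3 a b c) a].
Proof. by rewrite /between /med3 /absdiff; split; lia. Qed.

Lemma between_med3_uniq a b c m :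
  between a m b -> between b m c -> between c m a -> m = med3 a b c.
Proof.
move=> /betweenE/andP[? ?] /betweenE/andP[? ?] /betweenE/andP[? ?].
by rewrite /med3; lia.
Qed.

Definition step_toward a b := if a < b then a.+1 else a.-1.

Lemma step_toward_lt a b c : a < c -> b < c -> step_toward a b < c.
Proof. by rewrite /step_toward; case: (ltnP a b); lia. Qed.

Lemma absdiff_step_toward a b : a != b -> absdiff (step_toward a b) a = 1.
Proof. by move/eqP; rewrite /step_toward /absdiff; case: (ltnP a b); lia. Qed.

Lemma absdiff_step_toward_lt a b : a != b -> absdiff (step_toward a b) b < absdiff a b.
Proof. by move/eqP; rewrite /step_toward /absdiff; case: (ltnP a b); lia. Qed.

Section Grid.
Variables k n : nat.
Local Notation grid := {ffun 'I_k -> 'I_n.+1}.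

Definition grid_dist (f g : grid) : nat := l1dist (fun j => f j) (fun j => g j).

Definition grid_edge : rel grid := fun f g => grid_dist f g == 1.

Lemma grid_distnn f : grid_dist f f = 0.
Proof. by apply: big1 => j _; rewrite absdiffnn. Qed.

Lemma grid_dist_eq0 f g : grid_dist f g = 0 -> f = g.
Proof.
move/eqP; rewrite sum_nat_eq0 => /forallP zero; apply/ffunP => j; apply: val_inj.
by have /eqP := zero j; rewrite /absdiff /=; lia.
Qed.

Lemma grid_dist_edge f g h : grid_edge f g -> grid_dist f h <= (grid_dist g h).+1.
Proof. by move=> /eqP fg; rewrite -add1n -fg l1dist_triangle. Qed.

Lemma grid_dist_small f g : grid_dist f g < #|grid|.
Proof.
rewrite card_ffun !card_ord; apply: leq_ltn_trans (ltn_mul_expS k n).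
rewrite -[X in X * n]card_ord -sum_nat_const; apply: leq_sum => j _.
by have := ltn_ord (f j); have := ltn_ord (g j); rewrite /absdiff; lia.
Qed.

Lemma grid_step f g : f != g -> exists2 h, grid_edge f h & grid_dist h g < grid_dist f g.
Proof.
move=> neq_fg; have [j neq_j] : exists j, (f j : nat) != g j.
  apply/existsP; apply: contraR neq_fg => /existsPn same.
  by apply/eqP/ffunP => j; apply: val_inj; apply/eqP/negPn/same.
have lt_s : step_toward (f j) (g j) < n.+1 by apply: step_toward_lt.
pose h := [ffun x => if x == j then Ordinal lt_s else f x].
have dist_j (u v : grid) :
    grid_dist u v = absdiff (u j) (v j) + \sum_(x | x != j) absdiff (u x) (v x).
  exact: bigD1.
have h_off (u : grid) :
    \sum_(x | x != j) absdiff (h x) (u x) = \sum_(x | x != j) absdiff (f x) (u x).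
  by apply: eq_bigr => x neq_x; rewrite ffunE (negbTE neq_x).
have hj : h j = step_toward (f j) (g j) :> nat by rewrite ffunE eqxx.
have dist_hf : grid_dist h f = 1.
  rewrite dist_j h_off hj absdiff_step_toward // big1 // => x _.
  exact: absdiffnn.
exists h; first by rewrite /grid_edge /grid_dist l1distC -/(grid_dist h f) dist_hf.
by rewrite !dist_j h_off hj ltn_add2r absdiff_step_toward_lt.
Qed.

Lemma gdist_grid f g : gdist grid_edge f g = grid_dist f g.
Proof.
exact: gdist_potential grid_dist_eq0 grid_distnn grid_dist_edge grid_step grid_dist_small f g.
Qed.

Lemma grid_intervalP (f g h : grid) :
  reflect (forall j, between (f j) (h j) (g j)) (h \in interval grid_edge f g).
Proof. by rewrite inE !gdist_grid; apply: (iffP eqP) => /l1dist_betweenP. Qed.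

Lemma grid_simple : simple_graph grid_edge.
Proof.
split=> [f g | f]; first by rewrite /grid_edge /grid_dist l1distC.
by rewrite /grid_edge grid_distnn.
Qed.

Lemma grid_median : median_graph grid_edge.
Proof.
split.
  split=> [|f g]; first by exists [ffun=> ord0].
  apply: (@walkb_connect _ _ (grid_dist f g)).
  exact: (walkb_potential grid_dist_eq0 grid_distnn grid_dist_edge grid_step).
move=> u v w; pose m3 j := med3 (u j) (v j) (w j).
have lt_m3 j : m3 j < n.+1.
  by rewrite /m3 /med3; have := ltn_ord (u j); have := ltn_ord (v j); have := ltn_ord (w j); lia.
pose m := [ffun j => Ordinal (lt_m3 j)].
suff -> : interval grid_edge u v :&: interval grid_edge v w :&: interval grid_edge w u = [set m].
  exact: cards1.
apply/setP => h; rewrite !in_setI in_set1.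
apply/idP/idP => [|/eqP ->].
  move=> /andP[/andP[/grid_intervalP huv /grid_intervalP hvw] /grid_intervalP hwu].
  apply/eqP/ffunP => j; apply: val_inj; rewrite ffunE /=.
  exact: between_med3_uniq (huv j) (hvw j) (hwu j).
by apply/andP; split; [apply/andP; split|]; apply/grid_intervalP => j; rewrite ffunE /=;
  case: (between_med3 (u j) (v j) (w j)).
Qed.

Lemma grid_convex_box (P : 'I_k -> pred nat) :
  (forall j, ord_convex (P j)) -> gconvex grid_edge [set f : grid | [forall j, P j (f j)]].
Proof.
move=> convP f g; rewrite !inE => /forallP Pf /forallP Pg.
apply/subsetP => h /grid_intervalP btw; rewrite inE; apply/forallP => j.
exact: ord_convex_between (convP j) (btw j) (Pf j) (Pg j).
Qed.

Lemma grid_lattice_embeds : lattice_embeds grid_edge k.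
Proof.
exists (fun _ => n.+1), (fun (f : grid) j => f j); split=> [f j | f g]; first exact: ltn_ord.
exact: gdist_grid.
Qed.

End Grid.

(** * From path decompositions to a lattice decomposition *)

Lemma mem_nth_size (T : finType) (Z : seq {set T}) v k : v \in nth set0 Z k -> k < size Z.
Proof. by rewrite ltnNge; apply: contraL => /(nth_default set0) ->; rewrite inE. Qed.

Lemma path_decomposition_ord_convex (T : finType) (e : rel T) Z v :
  path_decomposition e Z -> ord_convex [pred k | v \in nth set0 Z k].
Proof.
case=> _ [_ /(_ v)[_ conv_v]] a b c /andP[le_ab le_bc] va vc.
exact: conv_v le_ab le_bc (mem_nth_size vc) va vc.
Qed.

Section GridDecomposition.
Variables (T : finType) (e : rel T) (i n : nat) (Zs : 'I_i -> seq {set T}).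
Hypothesis Zs_pd : forall j, path_decomposition e (Zs j).
Hypothesis size_Zs : forall j, size (Zs j) <= n.+1.

Definition grid_bags (f : {ffun 'I_i -> 'I_n.+1}) : {set T} := bag_inter Zs (fun j => f j).

Lemma mem_grid_bags v f : (v \in grid_bags f) = [forall j, v \in nth set0 (Zs j) (f j)].
Proof. by apply/bigcapP/forallP => [in_all j | in_all j _]; apply: in_all. Qed.

Lemma grid_bags_cover (P : {set T}) :
  (forall j, exists2 k, k < size (Zs j) & P \subset nth set0 (Zs j) k) ->
  exists f, P \subset grid_bags f.
Proof.
move=> covered.
have [g sub_g] : exists g : 'I_i -> 'I_n.+1, forall j, P \subset nth set0 (Zs j) (g j).
  apply: (@fin_all_exists _ (fun=> 'I_n.+1) (fun j k => P \subset nth set0 (Zs j) k)) => j.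
  have [k lt_k sub_k] := covered j.
  by exists (Ordinal (leq_trans lt_k (size_Zs j))).
exists (finfun g); apply/subsetP => v vP; rewrite mem_grid_bags; apply/forallP => j.
by rewrite ffunE (subsetP (sub_g j)).
Qed.

Lemma grid_bags_median_decomposition : median_decomposition e (@grid_edge i n) grid_bags.
Proof.
split; first exact: grid_simple.
split; first exact: grid_median.
split=> [u v uv | v].
  have [|f /subsetP sub_f] := grid_bags_cover (P := [set u; v]).
    move=> j; have [_ [cover_e _]] := Zs_pd j; have [k lt_k /andP[uk vk]] := cover_e u v uv.
    by exists k => //; apply/subsetP => x; rewrite !inE => /orP[] /eqP ->.
  by exists f; rewrite !sub_f ?set21 ?set22.
split.
  have [|f /subsetP sub_f] := grid_bags_cover (P := [set v]).
    move=> j; have [_ [_ /(_ v)[[k lt_k vk] _]]] := Zs_pd j.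
    by exists k => //; rewrite sub1set.
  by exists f; rewrite sub_f ?set11.
have -> : [set f | v \in grid_bags f] =
    [set f : {ffun 'I_i -> 'I_n.+1} | [forall j, [pred k | v \in nth set0 (Zs j) k] (f j)]].
  by apply/setP => f; rewrite !inE mem_grid_bags.
exact (grid_convex_box (fun j => path_decomposition_ord_convex (v := v) (Zs_pd j))).
Qed.

Lemma grid_bags_width w : tuple_value Zs w -> md_width grid_bags = w.
Proof.
case=> [[u0 [u0_range <-]] u_bound]; apply/eqP; rewrite eqn_leq; apply/andP; split.
  apply/bigmax_leqP => f _.
  have [/forallP f_range | /forallPn[j out_j]] := boolP [forall j, f j < size (Zs j)].
    exact: u_bound.
  (* grid nodes beyond the end of some path carry the empty bag *)
  suff -> : grid_bags f = set0 by rewrite cards0.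
  apply/setP => v; rewrite inE mem_grid_bags; apply/negbTE/negP => /forallP/(_ j).
  by rewrite nth_default ?inE // leqNgt.
pose f0 := [ffun j => Ordinal (leq_trans (u0_range j) (size_Zs j))].
have -> : bag_inter Zs u0 = grid_bags f0 by apply: eq_bigr => j _; rewrite ffunE.
exact: leq_bigmax.
Qed.

End GridDecomposition.

Lemma lattice_dec_of_path_tuple (T : finType) (e : rel T) i w :
  path_tuple_width e i w -> lattice_dec_width e i w.
Proof.
case=> Zs [Zs_pd Zs_w]; pose n := \max_(j < i) size (Zs j).
have size_Zs j : size (Zs j) <= n.+1.
  exact: leqW (leq_bigmax (F := fun j => size (Zs j)) j).
exists _, (@grid_edge i n), (grid_bags Zs (n := n)).
split; first exact: grid_bags_median_decomposition.
split; first by exists i => //; apply: grid_lattice_embeds.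
exact: grid_bags_width.
Qed.

(** * From a lattice decomposition to path decompositions *)

Lemma lattice_embeds_widen (M : finType) (eM : rel M) i :
  lattice_dim_le eM i -> lattice_embeds eM i.
Proof.
case=> k le_ki [len [phi [phi_lt phi_iso]]].
pose pad d (x : 'I_k -> nat) (j : 'I_i) := oapp x d (insub (val j)).
have pad_widen d x (j : 'I_k) : pad d x (widen_ord le_ki j) = x j by rewrite /pad /= valK.
exists (pad 1 len), (fun a => pad 0 (phi a)); split=> [a j | a b].
  by rewrite /pad; case: insubP => [j' _ _ /= | _ /=]; [apply: phi_lt | ].
rewrite phi_iso (bigID (fun j : 'I_i => j < k)) /= [X in _ + X]big1 ?addn0.
  by rewrite big_ord_narrow; apply: eq_bigr => j _; rewrite !pad_widen.
by move=> j out_j; rewrite /pad insubN.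
Qed.

Definition shadow (T M : finType) (X : M -> {set T}) (v : T) : {set M} := [set a | v \in X a].

Definition proj_covers (M : finType) (p : M -> nat) (A : {set M}) (t : nat) : bool :=
  [exists a in A, exists b in A, p a <= t <= p b].

Lemma proj_coversP (M : finType) (p : M -> nat) (A : {set M}) t :
  reflect (exists a b, [/\ a \in A, b \in A, p a <= t & t <= p b]) (proj_covers p A t).
Proof.
apply: (iffP existsP) => [[a /andP[aA /existsP[b /and3P[bA le_a le_b]]]] | ].
  by exists a, b.
case=> a [b [aA bA le_a le_b]].
by exists a; rewrite aA; apply/existsP; exists b; rewrite bA le_a le_b.
Qed.

Section Projection.
Variables (T M : finType) (e : rel T) (X : M -> {set T}) (p : M -> nat).

Definition proj_bag (t : nat) : {set T} := [set v | proj_covers p (shadow X v) t].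

Definition proj_decomposition : seq {set T} := mkseq proj_bag (\max_a p a).+1.

Lemma nth_proj_decomposition t :
  t < size proj_decomposition -> nth set0 proj_decomposition t = proj_bag t.
Proof. by rewrite size_mkseq => lt_t; rewrite nth_mkseq. Qed.

Lemma proj_path_decomposition :
  (forall v, exists a, v \in X a) ->
  (forall u v, e u v -> exists a, (u \in X a) && (v \in X a)) ->
  path_decomposition e proj_decomposition.
Proof.
move=> cover_v cover_e.
have lt_p a : p a < size proj_decomposition by rewrite size_mkseq ltnS leq_bigmax.
have in_bag_p v a : v \in X a -> v \in nth set0 proj_decomposition (p a).
  move=> va; rewrite nth_proj_decomposition // inE; apply/proj_coversP.
  by exists a, a; rewrite inE va.
split; first by rewrite size_mkseq.
split=> [u v /cover_e[a /andP[ua va]] | v]; first by exists (p a); rewrite ?in_bag_p.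
split; first by have [a va] := cover_v v; exists (p a); rewrite ?in_bag_p.
move=> x y z le_xy le_yz lt_z.
rewrite !nth_proj_decomposition ?(leq_ltn_trans le_yz) ?(leq_ltn_trans (leq_trans le_xy le_yz)) //.
rewrite !inE => /proj_coversP[a1 [_ [a1v _ le_a1 _]]] /proj_coversP[_ [b2 [_ b2v _ le_b2]]].
by apply/proj_coversP; exists a1, b2; split=> //; lia.
Qed.

End Projection.

Section L1Embedding.
Variables (M : finType) (eM : rel M) (k : nat) (phi : M -> 'I_k -> nat).
Hypotheses (eM_sym : symmetric eM) (eM_median : median_graph eM).
Hypothesis phi_iso : forall a b, gdist eM a b = l1dist (phi a) (phi b).

Lemma embedded_interval_between a b c :
  c \in interval eM a b -> forall j, between (phi a j) (phi c j) (phi b j).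
Proof. by rewrite inE !phi_iso => /eqP/l1dist_betweenP. Qed.

Lemma gconvex_meet_of_projections (A B : {set M}) :
  gconvex eM A -> gconvex eM B -> A != set0 -> B != set0 ->
  (forall j, exists t, proj_covers (phi^~ j) A t && proj_covers (phi^~ j) B t) ->
  A :&: B != set0.
Proof.
move=> convA convB /set0Pn[a0 a0A] /set0Pn[b0 b0B] overlap.
case: (@arg_minnP _ (a0, b0) [pred ab | (ab.1 \in A) && (ab.2 \in B)]
  (fun ab => gdist eM ab.1 ab.2)); first by rewrite /= a0A b0B.
move=> [a b] /andP[/= aA bB] min_ab; apply/set0Pn.
have [eq_ab | neq_ab] := eqVneq a b; first by exists a; rewrite inE aA eq_ab bB.
have /existsP[j neq_j] : [exists j, phi a j != phi b j].
  apply: contraR neq_ab => /existsPn same; apply/eqP/(@gdist_eq0 _ eM); rewrite phi_iso.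
  by apply: big1 => j _; rewrite (eqP (negPn (same j))) absdiffnn.
(* (a, b) is a closest pair, so a is the gate of b in A and b the gate of a in B:
   in a coordinate where a and b differ, A and B lie on opposite sides. *)
have gate_a a' : a' \in A -> a \in interval eM a' b.
  apply: (gate_in_interval eM_median eM_sym convA aA) => a'' a''A.
  by apply: (min_ab (a'', b)); rewrite /= a''A bB.
have gate_b b' : b' \in B -> b \in interval eM b' a.
  apply: (gate_in_interval eM_median eM_sym convB bB) => b'' b''B.
  by rewrite !(gdistC eM_sym _ a); apply: (min_ab (a, b'')); rewrite /= aA b''B.
have [t /andP[/proj_coversP[a1 [a2 [a1A a2A le_a1 le_a2]]]]] := overlap j.
move=> /proj_coversP[b1 [b2 [b1B b2B le_b1 le_b2]]].
have btw_a a' a'A := embedded_interval_between (gate_a a' a'A) j.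
have btw_b b' b'B := embedded_interval_between (gate_b b' b'B) j.
case: (ltngtP (phi a j) (phi b j)) neq_j => // [lt_ab _ | lt_ba _].
  have := between_left_le (btw_a _ a2A) lt_ab; have := between_left_ge (btw_b _ b1B) lt_ab.
  lia.
have := between_left_ge (btw_a _ a1A) lt_ba; have := between_left_le (btw_b _ b2B) lt_ba.
lia.
Qed.

End L1Embedding.

Lemma proj_decomposition_width (T M : finType) (e : rel T) (eM : rel M) (X : M -> {set T})
    i (phi : M -> 'I_i -> nat) (t : 'I_i -> nat) :
  median_decomposition e eM X -> (forall a b, gdist eM a b = l1dist (phi a) (phi b)) ->
  (forall j, t j < size (proj_decomposition X (phi^~ j))) ->
  #|bag_inter (fun j => proj_decomposition X (phi^~ j)) t| <= md_width X.
Proof.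
move=> [[eM_sym _] [eM_median [_ cover_v]]] phi_iso t_range.
set I := bag_inter _ t.
have covers_t v : v \in I -> forall j, proj_covers (phi^~ j) (shadow X v) (t j).
  by move=> /bigcapP vI j; have := vI j isT; rewrite nth_proj_decomposition // inE.
have shadow_ne v : shadow X v != set0.
  by have [a va] := (cover_v v).1; apply/set0Pn; exists a; rewrite inE.
have [x x_in] : exists x, {in [seq shadow X v | v <- enum I], forall A : {set M}, x \in A}.
  apply: (gconvex_helly eM_median) => [_ /mapP[v _ ->] | _ _ /mapP[u uI ->] /mapP[v vI ->]].
    exact: (cover_v v).2.
  move: uI vI; rewrite !mem_enum => uI vI.
  apply: (gconvex_meet_of_projections eM_sym eM_median phi_iso) (cover_v u).2 (cover_v v).2
    (shadow_ne u) (shadow_ne v) _ => j.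
  by exists (t j); rewrite !covers_t.
have sub_x : I \subset X x.
  apply/subsetP => v vI; have := x_in (shadow X v).
  by rewrite inE; apply; apply/map_f; rewrite mem_enum.
exact: leq_trans (subset_leq_card sub_x) (leq_bigmax x).
Qed.

Lemma tuple_value_exists (T : finType) i (Zs : 'I_i -> seq {set T}) w :
  (forall j, 0 < size (Zs j)) ->
  (forall u, (forall j, u j < size (Zs j)) -> #|bag_inter Zs u| <= w) ->
  exists2 w', w' <= w & tuple_value Zs w'.
Proof.
move=> Zs_ne bound.
pose P m := exists u : 'I_i -> nat, (forall j, u j < size (Zs j)) /\ #|bag_inter Zs u| = m.
have [||m [Pm max_m]] := @ex_maxP P w.
- by exists #|bag_inter Zs (fun=> 0)|, (fun=> 0).
- by move=> m [u [u_range <-]]; apply: bound.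
exists m; first by case: Pm => u [u_range <-]; apply: bound.
by split=> // u u_range; apply: max_m; exists u.
Qed.

Lemma path_tuple_of_lattice_dec (T : finType) (e : rel T) i w :
  lattice_dec_width e i w -> exists2 w', w' <= w & path_tuple_width e i w'.
Proof.
case=> M [eM [X [X_dec [dim_i <-]]]].
have [_ [phi [_ phi_iso]]] := lattice_embeds_widen dim_i.
have [_ [_ [cover_e cover_v]]] := X_dec.
pose Zs j := proj_decomposition X (phi^~ j).
have [|w' le_w' Zs_w'] := @tuple_value_exists T i Zs (md_width X) _
  (fun t => proj_decomposition_width X_dec phi_iso (t := t)).
  by move=> j; rewrite size_mkseq.
exists w' => //; exists Zs; split=> // j.
exact: proj_path_decomposition (fun v => (cover_v v).1) cover_e.
Qed.

Lemma trivial_path_decomposition (T : finType) (e : rel T) : path_decomposition e [:: [set: T]].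
Proof.
split=> //; split=> [u v _ | v]; first by exists 0 => //; rewrite !inE.
split=> [|a b c _ le_bc lt_c _ _]; first by exists 0 => //; rewrite inE.
have -> : b = 0 by move: lt_c => /=; lia.
by rewrite inE.
Qed.

Lemma path_tuple_width_exists (T : finType) (e : rel T) i : exists w, path_tuple_width e i w.
Proof.
pose Zs (j : 'I_i) := [:: [set: T]].
have [|w _ Zs_w] := @tuple_value_exists T i Zs #|T| _ (fun u _ => max_card _) => //.
by exists w, Zs; split=> // j; apply: trivial_path_decomposition.
Qed.

Theorem mainTheorem4 (T : finType) (e : rel T) (i : nat) :
  simple_graph e -> 1 <= i ->
  exists w, latticewidth_is e i w /\ is_min (path_tuple_width e i) w.
Proof.
(* the equality holds for every relation e and every i *)
move=> _ _.
have [w [ptw_w min_w]] := ex_minP (path_tuple_width_exists e i).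
exists w; split=> //; split=> [|w' /path_tuple_of_lattice_dec[w'' le_w'' /min_w]].
  exact: lattice_dec_of_path_tuple.
by move=> /leq_trans; apply.
Qed.
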